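(* Let $\lambda\in\mathbb{R}$, let $$J_5=\begin{pmatrix}\lambda&1&0\\0&\lambda&0\\0&0&\lambda\end{pmatrix},$$ and $h>0$. If $\psi,\phi,\theta$ are any real numbers with $\phi\neq 0$, $1-\phi\lambda\theta\neq 0$ and $$\frac{\psi+\phi\lambda(1-\theta)}{1-\phi\lambda\theta}=e^{\lambda h},\qquad \phi\,\frac{1-\theta+\psi\theta}{(1-\phi\lambda\theta)^2}=he^{\lambda h},$$ then the difference scheme $$\frac{\mathbf{x}_{k+1}-\psi\mathbf{x}_k}{\phi}=J_5\big[\theta\mathbf{x}_{k+1}+(1-\theta)\mathbf{x}_k\big]$$ is exact for the system $\mathbf{x}'=J_5\mathbf{x}$.
   Context: A one-step difference scheme with step size $h>0$ for $\mathbf{x}'=M\mathbf{x}$ is called exact if for every initial vector $\mathbf{x}_0$ the sequence $(\mathbf{x}_k)$ it generates satisfies $\mathbf{x}_k=\mathbf{x}(kh)$ for all $k\ge 0$, where $\mathbf{x}(t)$ solves $\mathbf{x}'=M\mathbf{x}$, $\mathbf{x}(0)=\mathbf{x}_0$. *)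

From HB Require Import structures.
From mathcomp Require Import all_boot all_order all_algebra.
From mathcomp Require Import all_classical all_reals all_analysis.
Set Implicit Arguments. Unset Strict Implicit. Unset Printing Implicit Defensive.
Import Order.TTheory GRing.Theory Num.Theory.
Import numFieldNormedType.Exports.
Local Open Scope ring_scope.

Definition J5 (R : ringType) (l : R) : 'M[R]_3 :=
  \matrix_(i < 3, j < 3)
    (if i == j then l
     else if (nat_of_ord i == 0%N) && (nat_of_ord j == 1%N) then 1 else 0).

Definition ode_solution (R : realType) (n : nat) (M : 'M[R]_n)
    (x0 : 'cV[R]_n) (y : R -> 'cV[R]_n) : Prop :=
  y 0 = x0 /\ forall t : R, is_derive t (1 : R) y (M *m y t).

Definition scheme_exact (R : realType) (n : nat)
    (step : 'cV[R]_n -> 'cV[R]_n -> Prop) (M : 'M[R]_n) (h : R) : Prop :=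
  forall x0 : 'cV[R]_n,
    (exists x : nat -> 'cV[R]_n, x 0%N = x0 /\ forall k, step (x k) (x k.+1)) /\
    (forall (x : nat -> 'cV[R]_n) (y : R -> 'cV[R]_n),
        x 0%N = x0 -> (forall k, step (x k) (x k.+1)) ->
        ode_solution M x0 y ->
        forall k : nat, x k = y (k%:R * h)).

Definition theta_step (R : realType) (n : nat) (M : 'M[R]_n) (psi phi theta : R)
    (xk xk1 : 'cV[R]_n) : Prop :=
  phi^-1 *: (xk1 - psi *: xk) = M *m (theta *: xk1 + (1 - theta) *: xk).

From HB Require Import structures.
From mathcomp Require Import all_boot all_order all_algebra.
From mathcomp Require Import all_classical all_reals all_analysis.
From mathcomp Require Import ring.
Import Order.TTheory GRing.Theory Num.Theory.
Import numFieldNormedType.Exports.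
Local Open Scope ring_scope.

(* Write J5 = lam I + N, where N x = (x_1, 0, 0) (components numbered from 0)
   and N^2 = 0.  The exact flow over time t is exp(t J5) = e^(lam t) (I + t N);
   uniqueness of solutions reduces, component by component, to the scalar
   equation u' = lam u + c e^(lam t).  Solving the implicit scheme the same way,
   with a = 1 - phi lam theta, multiplies every component by
   (psi + phi lam (1 - theta)) / a and adds phi (1 - theta + psi theta) / a^2
   times x_1 to component 0.  The hypotheses say that these coefficients are
   e^(lam h) and h e^(lam h), so one step of the scheme is the exact flow over
   time h, and exactness follows by induction. *)

Lemma scheme_exact_of_flow {R : realType} {n : nat} {M : 'M[R]_n} {h : R}
    {step : 'cV[R]_n -> 'cV[R]_n -> Prop} (f : 'cV[R]_n -> 'cV[R]_n) :
  (forall x x1, step x x1 <-> x1 = f x) ->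
  (forall x0 y, ode_solution M x0 y -> forall t, y (t + h) = f (y t)) ->
  scheme_exact step M h.
Proof.
move=> stepE flowE x0; split.
  by exists (fun k => iter k f x0); split=> // k; apply/stepE.
move=> x y x0E xS yS; elim=> [|k IHk].
  by case: yS => y0 _; rewrite mul0r x0E y0.
by move/stepE: (xS k) => ->; rewrite IHk -(flowE _ _ yS) mulrSr mulrDl mul1r.
Qed.

Lemma is_derive_entry {R : realFieldType} {V : normedModType R} {m n : nat}
    {A : V -> 'M[R]_(m, n)} {t v : V} {dA : 'M[R]_(m, n)} i j :
  is_derive t v A dA -> is_derive t v (fun s => A s i j) (dA i j).
Proof.
case=> dA_ex <-.
have /derivable_mxP/(_ i j) dAij := dA_ex.
by rewrite derive_mx // mxE; exact: derivableP.
Qed.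

Lemma expR_linear_ode {R : realType} (lam c : R) (u : R -> R) :
  (forall t : R, is_derive t (1 : R) u (lam * u t + c * expR (lam * t))) ->
  forall t, u t = expR (lam * t) * (u 0 + c * t).
Proof.
move=> du t.
have dw s : is_derive s (1 : R) (fun x => expR (- (lam * x)) * u x - c * x) 0.
  have := du s => ?; apply: trigger_derive.
  have E : expR (- (lam * s)) * expR (lam * s) = 1.
    by rewrite mulrC expRxMexpNx_1.
  rewrite /GRing.scale /= !mulr1 mulrDr [_ * (c * _)]mulrCA E; ring.
have := is_derive_0_is_cst t 0 dw.
rewrite mulr0 oppr0 expR0 mul1r mulr0 subr0 => /eqP; rewrite subr_eq => /eqP <-.
by rewrite mulrA -expRD subrr expR0 mul1r.
Qed.

Lemma theta_scalar_stepE (F : fieldType) (lam psi phi theta g z z1 : F) :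
  phi != 0 -> 1 - phi * lam * theta != 0 ->
  (phi^-1 * (z1 - psi * z) == lam * (theta * z1 + (1 - theta) * z) + g) =
  (z1 == (psi + phi * lam * (1 - theta)) / (1 - phi * lam * theta) * z
         + phi / (1 - phi * lam * theta) * g).
Proof.
move=> phi0 a0; set a := 1 - phi * lam * theta.
have /lregP a_phi_reg : a / phi != 0 by rewrite mulf_neq0 ?invr_eq0.
rewrite -subr_eq0 -[RHS]subr_eq0 -[RHS](mulrI_eq0 _ a_phi_reg).
by congr (_ == 0); rewrite /a; field; rewrite phi0 a0.
Qed.

Lemma ord3P (i : 'I_3) : i = 0 \/ i = 1 \/ i = 2%:R.
Proof.
case: i => [[|[|[|m]]] Hm] //.
- by left; apply: val_inj.
- by right; left; apply: val_inj.
- by right; right; apply: val_inj.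
Qed.

Section JordanBlock.
Context {R : realType}.
Implicit Types (lam h psi phi theta s t : R) (v x : 'cV[R]_3).

Lemma J5_mulmxE lam v :
  J5 lam *m v = \col_i (lam * v i 0 + (i == 0)%:R * v 1 0).
Proof.
apply/matrixP => i j; rewrite ord1 !mxE !big_ord_recl big_ord0 !mxE.
have -> : lift ord0 ord0 = 1 :> 'I_3 by apply: val_inj.
have -> : lift ord0 (lift ord0 ord0) = 2%:R :> 'I_3 by apply: val_inj.
by case: (ord3P i) => [->|[->|->]] /=; ring.
Qed.

Definition J5_flow lam t v : 'cV[R]_3 :=
  \col_i (expR (lam * t) * (v i 0 + (i == 0)%:R * t * v 1 0)).

Lemma J5_flowD lam s t v :
  J5_flow lam (s + t) v = J5_flow lam s (J5_flow lam t v).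
Proof.
apply/matrixP => i j; rewrite ord1 !mxE [lam * _]mulrDr expRD.
by case: (ord3P i) => [->|[->|->]] /=; ring.
Qed.

Lemma J5_ode_solutionE lam x0 y :
  ode_solution (J5 lam) x0 y -> forall t, y t = J5_flow lam t x0.
Proof.
case=> <- dy.
have dyi i t : is_derive t (1 : R) (fun s => y s i 0)
                 (lam * y t i 0 + (i == 0)%:R * y t 1 0).
  by have := is_derive_entry i 0 (dy t); rewrite J5_mulmxE mxE.
have y1E t : y t 1 0 = expR (lam * t) * y 0 1 0.
  rewrite (expR_linear_ode lam 0 (fun s => y s 1 0) _ t) ?mul0r ?addr0 // => s.
  by rewrite mul0r addr0; have := dyi 1 s; rewrite /= mul0r addr0.
move=> t; apply/matrixP => i j; rewrite ord1 mxE.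
set c := (i == 0)%:R * y 0 1 0.
rewrite (expR_linear_ode lam c (fun s => y s i 0) _ t) => [|s].
  by rewrite mulrAC.
by rewrite /c -mulrA [y 0 1 0 * _]mulrC -y1E; exact: dyi.
Qed.

Lemma theta_step_J5E lam h psi phi theta x x1 :
  phi != 0 -> 1 - phi * lam * theta != 0 ->
  (psi + phi * lam * (1 - theta)) / (1 - phi * lam * theta) = expR (lam * h) ->
  phi * ((1 - theta + psi * theta) / (1 - phi * lam * theta) ^+ 2)
    = h * expR (lam * h) ->
  theta_step (J5 lam) psi phi theta x x1 <-> x1 = J5_flow lam h x.
Proof.
move=> phi0 a0 growthE driftE.
set a := 1 - phi * lam * theta in growthE driftE *.
set e := expR (lam * h) in growthE driftE *.
have forcingE u : phi / a * (theta * (e * u) + (1 - theta) * u) = h * e * u.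
  by rewrite -driftE -growthE /a; field.
have stepE : theta_step (J5 lam) psi phi theta x x1 <-> forall i,
    x1 i 0 = e * x i 0
             + phi / a * ((i == 0)%:R * (theta * x1 1 0 + (1 - theta) * x 1 0)).
  rewrite /theta_step J5_mulmxE; split => [/matrixP E i | E].
  - apply/eqP; rewrite -growthE -theta_scalar_stepE //.
    by have := E i 0; rewrite !mxE => ->.
  - apply/matrixP => i j; rewrite ord1 !mxE; apply/eqP.
    by rewrite theta_scalar_stepE // growthE; exact/eqP/E.
rewrite stepE; split => [E | -> i].
- have x1_1 : x1 1 0 = e * x 1 0 by rewrite E /= mul0r mulr0 addr0.
  apply/matrixP => i j; rewrite ord1 E x1_1 mulrCA forcingE !mxE -/e; ring.
- by rewrite !mxE -/e /= !mul0r addr0 mulrCA forcingE; ring.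
Qed.

End JordanBlock.

Theorem theorem9 (R : realType) (lam h psi phi theta : R) :
  0 < h -> phi != 0 -> 1 - phi * lam * theta != 0 ->
  (psi + phi * lam * (1 - theta)) / (1 - phi * lam * theta) = expR (lam * h) ->
  phi * ((1 - theta + psi * theta) / (1 - phi * lam * theta) ^+ 2)
    = h * expR (lam * h) ->
  scheme_exact (theta_step (J5 lam) psi phi theta) (J5 lam) h.
Proof.
move=> _ phi0 a0 growthE driftE.
apply: (scheme_exact_of_flow (J5_flow lam h)).
  by move=> x x1; exact: theta_step_J5E.
move=> x0 y /J5_ode_solutionE yE t.
by rewrite !yE addrC J5_flowD.
Qed.
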